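(* Let $\kappa$ be a regular cardinal and $A$ a $\kappa$-additive complete atomic modal algebra. Then $\tau_A:A\to G(F(A))$, $\tau_A(x)=\{a\in\mathrm{At}(A)\mid a\leq x\}$, is an isomorphism of complete modal algebras; in particular, for every $x\in A$, $$\{a\in\mathrm{At}(A)\mid a\leq\Diamond x\}=\bigcap_{X\subseteq A,\ |X|<\kappa}R(X)^{-1}\big[\{a\in\mathrm{At}(A)\mid a\leq x\}\big].$$
   Context: A modal algebra is a Boolean algebra $A$ with a unary operation $\Diamond$ satisfying $\Diamond 0=0$ and $\Diamond(x\vee y)=\Diamond x\vee\Diamond y$; complete/atomic refer to the Boolean reduct (atomic: every non-zero element is the join of atoms below it); $\mathrm{At}(A)$ is the set of atoms; $\kappa$-additive means $\Diamond\bigvee X=\bigvee_{x\in X}\Diamond x$ for $|X|<\kappa$. A homomorphism of complete modal algebras is a Boolean homomorphism preserving all joins and meets and commuting with $\Diamond$. For $X\subseteq A$, $R(X)$ is the relation on $\mathrm{At}(A)$ with $a\,R(X)\,c\iff a\leq\bigwedge\{\Diamond x\mid x\in X,\ c\leq x\}$ (empty meet $=1$); $F(A)=\langle\mathrm{At}(A),\{R(X)\mid X\subseteq A,|X|<\kappa\}\rangle$. For a relation $R$ and a set $Y$, $R^{-1}[Y]=\{w\mid wRy\text{ for some }y\in Y\}$. For a multi-relational Kripke frame $M=\langle W,S\rangle$, $G(M)$ is the powerset Boolean algebra $\mathcal P(W)$ with $\Diamond_MY=\bigcap_{R\in S}R^{-1}[Y]$. *)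

From Stdlib Require Import Classical.

(** * Cardinals, represented by types *)

Definition injective {A B : Type} (f : A -> B) : Prop :=
  forall x y, f x = f y -> x = y.

Definition type_le (I K : Type) : Prop := exists f : I -> K, injective f.
Definition type_lt (I K : Type) : Prop := type_le I K /\ ~ type_le K I.

Definition card_lt {U : Type} (X : U -> Prop) (K : Type) : Prop :=
  type_lt {x : U | X x} K.

Definition regular (K : Type) : Prop :=
  type_le nat K /\
  forall (I : Type) (J : I -> Type),
    type_lt I K -> (forall i, type_lt (J i) K) -> type_lt {i : I & J i} K.

Record CBA := {
  car :> Type;
  le : car -> car -> Prop;
  bot : car; top : car;
  join : car -> car -> car; meet : car -> car -> car;
  compl : car -> car;
  sup : (car -> Prop) -> car; inf : (car -> Prop) -> car;
  le_refl : forall x, le x x;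
  le_trans : forall x y z, le x y -> le y z -> le x z;
  le_antisym : forall x y, le x y -> le y x -> x = y;
  bot_le : forall x, le bot x;
  le_top : forall x, le x top;
  join_ub_l : forall x y, le x (join x y);
  join_ub_r : forall x y, le y (join x y);
  join_lub : forall x y z, le x z -> le y z -> le (join x y) z;
  meet_lb_l : forall x y, le (meet x y) x;
  meet_lb_r : forall x y, le (meet x y) y;
  meet_glb : forall x y z, le z x -> le z y -> le z (meet x y);
  meet_join_distr : forall x y z, meet x (join y z) = join (meet x y) (meet x z);
  join_compl : forall x, join x (compl x) = top;
  meet_compl : forall x, meet x (compl x) = bot;
  sup_ub : forall P x, P x -> le x (sup P);
  sup_lub : forall P z, (forall x, P x -> le x z) -> le (sup P) z;
  inf_lb : forall P x, P x -> le (inf P) x;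
  inf_glb : forall P z, (forall x, P x -> le z x) -> le z (inf P)
}.

Arguments le {_} _ _.
Arguments bot {_}. Arguments top {_}.
Arguments join {_} _ _. Arguments meet {_} _ _. Arguments compl {_} _.
Arguments sup {_} _. Arguments inf {_} _.

Record CMA := {
  alg :> CBA;
  dia : alg -> alg;
  dia_bot : dia bot = bot;
  dia_join : forall x y, dia (join x y) = join (dia x) (dia y)
}.

Arguments dia {_} _.

Definition is_atom {A : CBA} (a : A) : Prop :=
  a <> bot /\ forall b, le b a -> b = bot \/ b = a.

Definition atomic (A : CBA) : Prop :=
  forall x : A, x <> bot -> x = sup (fun a => is_atom a /\ le a x).

Definition kappa_additive (K : Type) (A : CMA) : Prop :=
  forall X : A -> Prop, card_lt X K ->
    dia (sup X) = sup (fun d => exists x, X x /\ d = dia x).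

Definition At (A : CBA) : Type := {a : A | is_atom a}.

Definition Rel {A : CMA} (X : A -> Prop) (a c : At A) : Prop :=
  le (proj1_sig a) (inf (fun d => exists x, X x /\ le (proj1_sig c) x /\ d = dia x)).

Definition preimg {W : Type} (R : W -> W -> Prop) (Y : W -> Prop) : W -> Prop :=
  fun w => exists y, Y y /\ R w y.

Definition diaGF (K : Type) (A : CMA) (Y : At A -> Prop) : At A -> Prop :=
  fun w => forall X : A -> Prop, card_lt X K -> preimg (Rel X) Y w.

Definition tau (A : CMA) (x : A) : At A -> Prop :=
  fun a => le (proj1_sig a) x.

(** * Isomorphisms of complete modal algebras into a powerset modal algebra
    (sets are subsets W -> Prop, equal when extensionally equal) *)

Definition set_eq {W : Type} (Y Z : W -> Prop) : Prop := forall w, Y w <-> Z w.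

Definition is_CMA_iso_pow (A : CMA) (W : Type) (dM : (W -> Prop) -> (W -> Prop))
    (f : A -> (W -> Prop)) : Prop :=
  (forall x y, set_eq (f x) (f y) -> x = y) /\
  (forall Y : W -> Prop, exists x, set_eq (f x) Y) /\
  set_eq (f bot) (fun _ => False) /\
  set_eq (f top) (fun _ => True) /\
  (forall x y, set_eq (f (join x y)) (fun w => f x w \/ f y w)) /\
  (forall x y, set_eq (f (meet x y)) (fun w => f x w /\ f y w)) /\
  (forall x, set_eq (f (compl x)) (fun w => ~ f x w)) /\
  (forall P : A -> Prop, set_eq (f (sup P)) (fun w => exists x, P x /\ f x w)) /\
  (forall P : A -> Prop, set_eq (f (inf P)) (fun w => forall x, P x -> f x w)) /\
  (forall x, set_eq (f (dia x)) (dM (f x))).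

(* Every element of an atomic complete Boolean algebra is the join of the atoms
   below it, so [tau] is a complete Boolean isomorphism onto the powerset of
   the atoms.  It commutes with the diamonds: if an atom [a] lies below [dia x]
   but some relation [R(X)] has no [R(X)]-successor of [a] inside [tau x], then
   [x] is covered by the set [Z] of those [y] in [X] with [~ a <= dia y]; since
   [|Z| < kappa], additivity gives [a <= dia (sup Z) = sup (dia @ Z)], and the
   atom [a] must lie below some [dia y] with [y] in [Z], a contradiction.
   Conversely the singleton [{x}] has size [< kappa] and [R({x})] only relates
   [a] to atoms of [tau x] when [a <= dia x]. *)
From Stdlib Require Import Classical.

Section BooleanAlgebra.
Variable A : CBA.
Implicit Types x y z a : A.

Lemma meet_comm x y : meet x y = meet y x.
Proof. apply le_antisym; apply meet_glb; (apply meet_lb_l || apply meet_lb_r). Qed.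

Lemma meet_top_r x : meet x top = x.
Proof. apply le_antisym; [apply meet_lb_l | apply meet_glb; [apply le_refl | apply le_top]]. Qed.

Lemma join_bot_l x : join bot x = x.
Proof. apply le_antisym; [apply join_lub; [apply bot_le | apply le_refl] | apply join_ub_r]. Qed.

Lemma le_bot_eq x : le x bot -> x = bot.
Proof. intro H; apply le_antisym; [exact H | apply bot_le]. Qed.

Lemma le_compl_of_meet_bot x y : meet x y = bot -> le x (compl y).
Proof.
  intro H. rewrite <- (meet_top_r x), <- (join_compl A y), meet_join_distr, H, join_bot_l.
  apply meet_lb_r.
Qed.

Lemma not_le_inf z (P : A -> Prop) : ~ le z (inf P) -> exists x, P x /\ ~ le z x.
Proof.
  intro H. apply NNPP; intro Hn. apply H, inf_glb. intros x Px.
  apply NNPP; intro Hx. apply Hn; eauto.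
Qed.

Lemma atom_le_or_disjoint a y : is_atom a -> le a y \/ meet a y = bot.
Proof.
  intros [_ Ha]. destruct (Ha (meet a y) (meet_lb_l _ _ _)) as [H|H]; [now right|].
  left. rewrite <- H. apply meet_lb_r.
Qed.

Lemma atom_not_le_compl a x : is_atom a -> le a x -> ~ le a (compl x).
Proof.
  intros [Hn _] H1 H2. apply Hn, le_bot_eq. rewrite <- (meet_compl A x).
  apply meet_glb; assumption.
Qed.

Lemma atom_le_compl a x : is_atom a -> ~ le a x -> le a (compl x).
Proof.
  intros Ha H. apply le_compl_of_meet_bot.
  destruct (atom_le_or_disjoint a x Ha); tauto.
Qed.

(* An atom outside every element of a set is below the complement of its sup. *)
Lemma atom_le_sup a (P : A -> Prop) :
  is_atom a -> le a (sup P) -> exists x, P x /\ le a x.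
Proof.
  intros Ha H. apply NNPP; intro Hn.
  assert (Hc : le (sup P) (compl a)).
  { apply sup_lub. intros x Px. apply le_compl_of_meet_bot. rewrite meet_comm.
    destruct (atom_le_or_disjoint a x Ha) as [h|h]; [exfalso; eauto | exact h]. }
  exact (atom_not_le_compl a a Ha (le_refl _ a) (le_trans _ _ _ _ H Hc)).
Qed.

Lemma atom_le_join a x y : is_atom a -> le a (join x y) -> le a x \/ le a y.
Proof.
  intros Ha H. apply NNPP; intro Hn.
  assert (Hc : le (join x y) (compl a)).
  { apply join_lub; apply le_compl_of_meet_bot; rewrite meet_comm;
      [destruct (atom_le_or_disjoint a x Ha) | destruct (atom_le_or_disjoint a y Ha)]; tauto. }
  exact (atom_not_le_compl a a Ha (le_refl _ a) (le_trans _ _ _ _ H Hc)).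
Qed.

Lemma atomic_le x y : atomic A ->
  (forall a, is_atom a -> le a x -> le a y) -> le x y.
Proof.
  intros HA H. destruct (classic (x = bot)) as [->|E]; [apply bot_le|].
  rewrite (HA x E). apply sup_lub. intros a [Ha Hx]. auto.
Qed.

End BooleanAlgebra.

Lemma dia_mono (A : CMA) (x y : A) : le x y -> le (dia x) (dia y).
Proof.
  intro H. assert (E : join x y = y).
  { apply le_antisym; [apply join_lub; [exact H | apply le_refl] | apply join_ub_r]. }
  rewrite <- E, dia_join. apply join_ub_l.
Qed.

Lemma card_lt_sub {U : Type} (X Z : U -> Prop) (K : Type) :
  (forall u, Z u -> X u) -> card_lt X K -> card_lt Z K.
Proof.
  intros HZ [[f Hf] Hn].
  set (g := fun z : {u | Z u} => exist X (proj1_sig z) (HZ _ (proj2_sig z))).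
  assert (Hg : injective g).
  { intros [a pa] [b pb] E. injection E as ->.
    now rewrite (proof_irrelevance _ pa pb). }
  split.
  - exists (fun z => f (g z)). intros a b E. exact (Hg _ _ (Hf _ _ E)).
  - intros [h Hh]. apply Hn. exists (fun k => g (h k)). intros a b E. exact (Hh _ _ (Hg _ _ E)).
Qed.

Lemma card_lt_singleton {U : Type} (x : U) (K : Type) :
  regular K -> card_lt (fun y => y = x) K.
Proof.
  intros [[f Hf] _].
  assert (Hsub : forall p q : {y | y = x}, p = q).
  { intros [a pa] [b pb]. destruct pa, pb. reflexivity. }
  split.
  - exists (fun _ => f 0). intros p q _. apply Hsub.
  - intros [h Hh]. discriminate (Hf 0 1 (Hh _ _ (Hsub _ _))).
Qed.

Section Representation.
Variable A : CMA.
Hypothesis A_atomic : atomic A.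

Lemma tau_injective (x y : A) : set_eq (tau A x) (tau A y) -> x = y.
Proof.
  intro E. apply le_antisym; apply atomic_le; auto;
    intros a Ha; apply (E (exist _ a Ha)).
Qed.

Lemma tau_surjective (Y : At A -> Prop) :
  set_eq (tau A (sup (fun b => exists w, Y w /\ b = proj1_sig w))) Y.
Proof.
  intros [w Hw]; unfold tau; simpl; split.
  - intro h. destruct (atom_le_sup _ _ _ Hw h) as [b [[[w' Hw'] [Yw ->]] hb]].
    simpl in hb. destruct (proj2 Hw' w hb) as [E|E]; [now destruct Hw|subst].
    now rewrite (proof_irrelevance _ Hw Hw').
  - intro h. apply sup_ub. exists (exist _ w Hw); auto.
Qed.

Lemma tau_bot : set_eq (tau A bot) (fun _ => False).
Proof. intros [a Ha]; unfold tau; simpl; split; [|tauto]. intro h; exact (proj1 Ha (le_bot_eq _ _ h)). Qed.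

Lemma tau_top : set_eq (tau A top) (fun _ => True).
Proof. intros w; unfold tau; simpl; split; [tauto | intros _; apply le_top]. Qed.

Lemma tau_join (x y : A) : set_eq (tau A (join x y)) (fun w => tau A x w \/ tau A y w).
Proof.
  intros [a Ha]; unfold tau; simpl; split; [now apply atom_le_join|].
  intros [h|h]; eapply le_trans; eauto; [apply join_ub_l | apply join_ub_r].
Qed.

Lemma tau_meet (x y : A) : set_eq (tau A (meet x y)) (fun w => tau A x w /\ tau A y w).
Proof.
  intros [a Ha]; unfold tau; simpl; split.
  - intro h; split; eapply le_trans; eauto; [apply meet_lb_l | apply meet_lb_r].
  - intros [h1 h2]; now apply meet_glb.
Qed.

Lemma tau_compl (x : A) : set_eq (tau A (compl x)) (fun w => ~ tau A x w).
Proof.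
  intros [a Ha]; unfold tau; simpl; split.
  - intros h1 h2. exact (atom_not_le_compl _ _ _ Ha h2 h1).
  - now apply atom_le_compl.
Qed.

Lemma tau_sup (P : A -> Prop) : set_eq (tau A (sup P)) (fun w => exists x, P x /\ tau A x w).
Proof.
  intros [a Ha]; unfold tau; simpl; split; [now apply atom_le_sup|].
  intros [x [Px hx]]. eapply le_trans; [exact hx | now apply sup_ub].
Qed.

Lemma tau_inf (P : A -> Prop) : set_eq (tau A (inf P)) (fun w => forall x, P x -> tau A x w).
Proof.
  intros [a Ha]; unfold tau; simpl; split.
  - intros h x Px. eapply le_trans; [exact h | now apply inf_lb].
  - intro h. now apply inf_glb.
Qed.

Lemma tau_dia_sub (K : Type) (x : A) :
  kappa_additive K A -> forall w, tau A (dia x) w -> diaGF K A (tau A x) w.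
Proof.
  intros Hadd [a Ha] H X HX. unfold tau in H; simpl in H.
  apply NNPP; intro Hn.
  set (Z := fun y => X y /\ ~ le a (dia y)).
  assert (HZ : card_lt Z K) by (apply (card_lt_sub X); [intros u []|]; assumption).
  assert (Hx : le x (sup Z)).
  { apply atomic_le; [exact A_atomic|]. intros c Hc Hcx.
    assert (Hnr : ~ Rel X (exist _ a Ha) (exist _ c Hc)) by (intro; apply Hn; now exists (exist _ c Hc)).
    destruct (not_le_inf _ _ _ Hnr) as [d [[y [Xy [cy ->]]] Hd]].
    eapply le_trans; [exact cy | now apply sup_ub]. }
  pose proof (le_trans _ _ _ _ H (dia_mono A _ _ Hx)) as Hsup.
  rewrite (Hadd Z HZ) in Hsup.
  destruct (atom_le_sup _ _ _ Ha Hsup) as [d [[y [[_ Hy] ->]] Hd]]. contradiction.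
Qed.

Lemma diaGF_tau_sub (K : Type) (x : A) :
  regular K -> forall w, diaGF K A (tau A x) w -> tau A (dia x) w.
Proof.
  intros HK [a Ha] H.
  destruct (H (fun y => y = x) (card_lt_singleton x K HK)) as [c [Hcx Hr]].
  eapply le_trans; [exact Hr | apply inf_lb]. now exists x.
Qed.

End Representation.

Theorem theorem9p2 (K : Type) (A : CMA) :
  regular K -> kappa_additive K A -> atomic A ->
  is_CMA_iso_pow A (At A) (diaGF K A) (tau A) /\
  (forall x : A,
     set_eq (tau A (dia x))
            (fun a => forall X : A -> Prop, card_lt X K ->
                        preimg (Rel X) (tau A x) a)).
Proof.
  intros HK Hadd HA.
  assert (Hdia : forall x : A, set_eq (tau A (dia x)) (diaGF K A (tau A x))).
  { intros x w; split; [apply tau_dia_sub | apply diaGF_tau_sub]; assumption. }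
  split; [|exact Hdia].
  exact (conj (tau_injective A HA)
        (conj (fun Y => ex_intro (fun x => set_eq (tau A x) Y) _ (tau_surjective A Y))
        (conj (tau_bot A) (conj (tau_top A) (conj (tau_join A) (conj (tau_meet A)
        (conj (tau_compl A) (conj (tau_sup A) (conj (tau_inf A) Hdia))))))))).
Qed.
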